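(* Let $N=\{1,\dots,n\}$, let $F:2^N\to\mathbb{R}$ be quasi-submodular, and run the minimization procedure (described in the context) from an arbitrary $X_0\subseteq N$. Then for every iteration $t$ other than the last one (i.e., every $t$ with $X_{t+1}\neq X_t$), $F(X_{t+1})<F(X_t)$.
   Context: For $A\subseteq N$ and $i\in N$, write $A+i=A\cup\{i\}$, $A-i=A\setminus\{i\}$, and $F(i\mid A)=F(A+i)-F(A)$. $F$ is quasi-submodular if for all $X,Y\subseteq N$ both hold: $F(X\cap Y)\ge F(X)\Rightarrow F(Y)\ge F(X\cup Y)$, and $F(X\cap Y)>F(X)\Rightarrow F(Y)>F(X\cup Y)$. Minimization procedure: given $X_0\subseteq N$, for $t=0,1,2,\dots$: let $U_t=\{u\in N\setminus X_t: F(u\mid X_t)<0\}$ and $Y_t=X_t\cup U_t$; let $D_t=\{d\in X_t: F(d\mid Y_t-d)>0\}$ and $X_{t+1}=Y_t\setminus D_t$; if $X_{t+1}=X_t$, stop and output $X_t$; otherwise continue with $t+1$. *)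

From mathcomp Require Import all_boot all_order all_algebra.
Set Implicit Arguments. Unset Strict Implicit. Unset Printing Implicit Defensive.
Import Order.TTheory GRing.Theory Num.Theory.
Local Open Scope ring_scope.

(* Ground set N = {1..n} is modelled as 'I_n; subsets as {set 'I_n}. *)

Definition marg (n : nat) (R : realFieldType) (F : {set 'I_n} -> R)
  (i : 'I_n) (A : {set 'I_n}) : R := F (i |: A) - F A.

Definition quasi_submodular (n : nat) (R : realFieldType) (F : {set 'I_n} -> R) : Prop :=
  forall X Y : {set 'I_n},
    (F X <= F (X :&: Y) -> F (X :|: Y) <= F Y) /\
    (F X < F (X :&: Y) -> F (X :|: Y) < F Y).

Definition U_step (n : nat) (R : realFieldType) (F : {set 'I_n} -> R) (X : {set 'I_n}) :=
  [set u in ~: X | marg F u X < 0].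
Definition Y_step (n : nat) (R : realFieldType) (F : {set 'I_n} -> R) (X : {set 'I_n}) :=
  X :|: U_step F X.
Definition D_step (n : nat) (R : realFieldType) (F : {set 'I_n} -> R) (X : {set 'I_n}) :=
  [set d in X | 0 < marg F d (Y_step F X :\ d)].
Definition next_step (n : nat) (R : realFieldType) (F : {set 'I_n} -> R) (X : {set 'I_n}) :=
  Y_step F X :\: D_step F X.

(* X_t : the t-th iterate starting from X0 (the procedure stops at the first
   t with X_{t+1} = X_t, after which the iterates are constant) *)
Definition iterate (n : nat) (R : realFieldType) (F : {set 'I_n} -> R)
  (X0 : {set 'I_n}) (t : nat) : {set 'I_n} := iter t (next_step F) X0.

From mathcomp Require Import all_boot all_order all_algebra.
Import Order.TTheory GRing.Theory Num.Theory.
Local Open Scope ring_scope.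

(* Quasi-submodularity makes a strict decrease persist: if adding u to A
   decreases F, so does adding u to any superset B of A not containing u
   (apply it to u + A and B), and dually for removing an element from a subset.
   Adding the elements of U_t, and then removing those of D_t, one at a time
   therefore decreases F at every single step, and unless the procedure has
   stopped at least one of U_t, D_t is nonempty. *)

Section QuasiSubmodular.

Context {n : nat} {R : realFieldType} {F : {set 'I_n} -> R}.
Hypothesis qsubF : quasi_submodular F.

Lemma qsub_addition_lt (A B : {set 'I_n}) (u : 'I_n) :
  A \subset B -> u \notin B -> F (u |: A) < F A -> F (u |: B) < F B.
Proof.
move=> sAB uB ltA; have [_ qsub_lt] := qsubF (u |: A) B.
have capE : (u |: A) :&: B = A.
  by rewrite setIUl (setIidPl sAB) (_ : [set u] :&: B = set0) ?set0U //;
     apply/setP=> x; rewrite !inE; case: eqP => // ->; rewrite (negbTE uB).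
have cupE : (u |: A) :|: B = u |: B by rewrite -setUA (setUidPr sAB).
by rewrite -cupE; apply: qsub_lt; rewrite capE.
Qed.

Lemma qsub_removal_lt (A B : {set 'I_n}) (u : 'I_n) :
  A \subset B -> u \in A -> F (B :\ u) < F B -> F (A :\ u) < F A.
Proof.
move=> sAB uA ltB; have [qsub_le _] := qsubF A (B :\ u).
have capE : A :&: (B :\ u) = A :\ u by rewrite setIDA (setIidPl sAB).
have cupE : A :|: (B :\ u) = B.
  apply/setP=> x; rewrite !inE; case: (eqVneq x u) => [->|_] /=.
    by rewrite uA (subsetP sAB).
  by apply/idP/idP=> [/orP[/(subsetP sAB)|]|->] //; rewrite orbT.
by rewrite ltNge -capE; apply/negP => /qsub_le; rewrite cupE leNgt ltB.
Qed.

Lemma qsub_setU_lt (X S : {set 'I_n}) :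
  S \subset ~: X -> {in S, forall u, F (u |: X) < F X} ->
  S != set0 -> F (X :|: S) < F X.
Proof.
have [k] := ubnP #|S|; elim: k S => // k IH S ltSk sSX ltS /set0Pn[u uS].
have uX : u \notin X by have := subsetP sSX u uS; rewrite inE.
have SE : X :|: S = u |: (X :|: S :\ u) by rewrite setUCA setD1K.
have [S'0|S'n] := eqVneq (S :\ u) set0.
  by rewrite SE S'0 setU0; apply: ltS.
have ltS' : F (X :|: S :\ u) < F X.
  apply: IH => //; first by rewrite (cardsD1 u) uS in ltSk.
  - by apply: subset_trans sSX; apply: subsetDl.
  - by move=> v /setD1P[_ vS]; apply: ltS.
rewrite SE; apply: lt_trans _ ltS'; apply: (@qsub_addition_lt X _ u (subsetUl _ _)).
  by rewrite !inE eqxx (negbTE uX).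
exact: ltS.
Qed.

Lemma qsub_setD_lt (Y S : {set 'I_n}) :
  S \subset Y -> {in S, forall d, F (Y :\ d) < F Y} ->
  S != set0 -> F (Y :\: S) < F Y.
Proof.
have [k] := ubnP #|S|; elim: k S => // k IH S ltSk sSY ltS /set0Pn[d dS].
have SE : Y :\: S = (Y :\: (S :\ d)) :\ d by rewrite setDDl setUC setD1K.
have [S'0|S'n] := eqVneq (S :\ d) set0.
  by rewrite SE S'0 setD0; apply: ltS.
have ltS' : F (Y :\: (S :\ d)) < F Y.
  apply: IH => //; first by rewrite (cardsD1 d) dS in ltSk.
  - by apply: subset_trans sSY; apply: subsetDl.
  - by move=> v /setD1P[_ vS]; apply: ltS.
rewrite SE; apply: lt_trans _ ltS'; apply: (@qsub_removal_lt _ Y d (subsetDl _ _)).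
  by rewrite !inE eqxx (subsetP sSY).
exact: ltS.
Qed.

Lemma Y_step_lt (X : {set 'I_n}) :
  U_step F X != set0 -> F (Y_step F X) < F X.
Proof.
apply: qsub_setU_lt; first by apply/subsetP=> u; rewrite inE => /andP[].
by move=> u; rewrite inE /marg subr_lt0 => /andP[].
Qed.

Lemma Y_step_le (X : {set 'I_n}) : F (Y_step F X) <= F X.
Proof.
have [U0|Un] := eqVneq (U_step F X) set0; first by rewrite /Y_step U0 setU0.
exact/ltW/Y_step_lt.
Qed.

Lemma next_step_lt_Y_step (X : {set 'I_n}) :
  D_step F X != set0 -> F (next_step F X) < F (Y_step F X).
Proof.
have sDY : D_step F X \subset Y_step F X.
  by apply/subsetP=> d; rewrite !inE => /andP[-> _].
apply: qsub_setD_lt => // d dD; move: (dD); rewrite inE /marg subr_gt0.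
by rewrite setD1K ?(subsetP sDY) // => /andP[].
Qed.

End QuasiSubmodular.

Theorem lemma1 (n : nat) (R : realFieldType) (F : {set 'I_n} -> R)
  (X0 : {set 'I_n}) (t : nat) :
  quasi_submodular F ->
  iterate F X0 t.+1 != iterate F X0 t ->
  F (iterate F X0 t.+1) < F (iterate F X0 t).
Proof.
rewrite /iterate iterS; set X := iter t _ X0 => qsubF moved.
have [D0|Dn] := eqVneq (D_step F X) set0.
  have nextE : next_step F X = Y_step F X by rewrite /next_step D0 setD0.
  rewrite nextE; apply: Y_step_lt => //; apply: contraNneq moved => U0.
  by rewrite nextE /Y_step U0 setU0.
by apply: lt_le_trans (Y_step_le qsubF X); apply: next_step_lt_Y_step.
Qed.
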